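(* Let $r\ge2$ and $p\ge2$ be integers, $\mathcal{A}$ the adjacency tensor of an $r$-uniform (possibly weighted) hypergraph on $n$ vertices, and $f(\mathbf{x})=(r-1)!\,\mathcal{A}\mathbf{x}^r/\|\mathbf{x}\|_p^r$. Suppose the sequence $\{\mathbf{x}_k\}$ is generated by the CSRH iteration (described in the context) from an arbitrary unit vector $\mathbf{x}_0\in\mathbb{S}^{n-1}$, that it is infinite, and that $\nabla f(\mathbf{x}_k)\neq0$ for all $k$. Then $$\lim_{k\to\infty}\|\nabla f(\mathbf{x}_k)\|=0.$$
   Context: $\mathbb{S}^{n-1}=\{\mathbf{x}\in\mathbb{R}^n:\mathbf{x}^\top\mathbf{x}=1\}$. Adjacency tensor: for a weighted $r$-uniform hypergraph with vertex set $\{1,\dots,n\}$ and edge weights $s(e)>0$, $\mathcal{A}=(a_{i_1\cdots i_r})$ is symmetric with $a_{i_1\cdots i_r}=s(e)/(r-1)!$ if $\{i_1,\dots,i_r\}=e$ is an edge and $0$ otherwise; $\mathcal{A}\mathbf{x}^r=\sum a_{i_1\cdots i_r}x_{i_1}\cdots x_{i_r}$, $(\mathcal{A}\mathbf{x}^{r-1})_i=\sum a_{ii_2\cdots i_r}x_{i_2}\cdots x_{i_r}$, $\|\mathbf{x}\|_p=(\sum|x_i|^p)^{1/p}$, $\|\cdot\|$ Euclidean. $\nabla f(\mathbf{x})=\frac{r!}{\|\mathbf{x}\|_p^r}(\mathcal{A}\mathbf{x}^{r-1}-\mathcal{A}\mathbf{x}^r\|\mathbf{x}\|_p^{-p}\mathbf{x}^{\langle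 p-1\rangle})$ with $(\mathbf{x}^{\langle p-1\rangle})_i=|x_i|^{p-1}\mathrm{sgn}(x_i)$. CSRH iteration: fix $0<c_1<c_2<1$, $\tfrac14<\tau<1$, $\epsilon>0$, a unit vector $\mathbf{x}_0$, and $\mathbf{p}_0=\nabla f(\mathbf{x}_0)$. At step $k$, with $\mathbf{x}_{k+1}(\alpha)=\frac{[(2-\alpha\mathbf{x}_k^\top\mathbf{p}_k)^2-\|\alpha\mathbf{p}_k\|^2]\mathbf{x}_k+4\alpha\mathbf{p}_k}{4+\|\alpha\mathbf{p}_k\|^2-(\alpha\mathbf{x}_k^\top\mathbf{p}_k)^2}$, choose $\alpha_k>0$ with $f(\mathbf{x}_{k+1}(\alpha_k))\ge f(\mathbf{x}_k)+c_1\alpha_k\nabla f(\mathbf{x}_k)^\top\mathbf{p}_k$ and $\nabla f(\mathbf{x}_{k+1}(\alpha_k))^\top\mathbf{p}_k\le c_2\nabla f(\mathbf{x}_k)^\top\mathbf{p}_k$; set $\mathbf{x}_{k+1}=\mathbf{x}_{k+1}(\alpha_k)$, $\mathbf{d}_k=\mathbf{x}_{k+1}-\mathbf{x}_k$, $\mathbf{y}_k=\nabla f(\mathbf{x}_{k+1})-\nabla f(\mathbf{x}_k)$, $\beta_k=\max(0,\tilde\beta_k)$ where $\tilde\beta_k=(\tau\mathbf{d}_k\|\mathbf{y}_k\|^2/(\mathbf{d}_k^\top\mathbf{y}_k)-\mathbf{y}_k)^\top\nabla f(\mathbf{x}_{k+1})/(\mathbf{d}_k^\top\mathbf{y}_k)$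 if $|\mathbf{d}_k^\top\mathbf{y}_k|\ge\epsilon\|\mathbf{d}_k\|\|\mathbf{y}_k\|$ and $\tilde\beta_k=0$ otherwise, and $\mathbf{p}_{k+1}=\nabla f(\mathbf{x}_{k+1})+\beta_k\mathbf{d}_k$. *)

From HB Require Import structures.
From mathcomp Require Import all_boot all_order all_algebra.
From mathcomp Require Import all_classical all_reals all_analysis.
Set Implicit Arguments. Unset Strict Implicit. Unset Printing Implicit Defensive.
Import Order.TTheory GRing.Theory Num.Theory.
Local Open Scope ring_scope.

Section CSRH.
Variables (R : realType) (n r p : nat).

Definition vec := 'I_n -> R.

Definition dotv (u v : vec) : R := \sum_(i < n) u i * v i.
Definition enorm (v : vec) : R := Num.sqrt (dotv v v).
Definition pnorm (v : vec) : R := (\sum_(i < n) `|v i| ^+ p) `^ (p%:R^-1).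

(* weighted r-uniform hypergraph: edge set E (subsets of vertices of size r),
   weights s (positive on edges); adjacency tensor entries indexed by
   r-tuples t = (i_1, ..., i_r) *)
Variables (E : {set {set 'I_n}}) (s : {set 'I_n} -> R).

Definition adj (t : {ffun 'I_r -> 'I_n}) : R :=
  if [set t j | j : 'I_r] \in E then s [set t j | j : 'I_r] / (r.-1)`!%:R else 0.

Definition Axr (x : vec) : R :=
  \sum_(t : {ffun 'I_r -> 'I_n}) adj t * \prod_(j : 'I_r) x (t j).

Definition Axr1 (x : vec) (i : 'I_n) : R :=
  \sum_(t : {ffun 'I_r -> 'I_n} | [forall j : 'I_r, (val j == 0%N) ==> (t j == i)])
     adj t * \prod_(j : 'I_r | val j != 0%N) x (t j).

Definition fobj (x : vec) : R := (r.-1)`!%:R * Axr x / pnorm x ^+ r.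

Definition xpow (x : vec) : vec := fun i => `|x i| ^+ p.-1 * Num.sg (x i).

Definition grad (x : vec) : vec := fun i =>
  r`!%:R / pnorm x ^+ r * (Axr1 x i - Axr x * (pnorm x ^+ p)^-1 * xpow x i).

Definition xnext (x d : vec) (alpha : R) : vec := fun i =>
  (((2 - alpha * dotv x d) ^+ 2 - enorm (fun j => alpha * d j) ^+ 2) * x i
     + 4 * alpha * d i)
  / (4 + enorm (fun j => alpha * d j) ^+ 2 - (alpha * dotv x d) ^+ 2).

Definition beta_tilde (tau eps : R) (d y g : vec) : R :=
  if eps * enorm d * enorm y <= `|dotv d y|
  then dotv (fun i => tau * d i * enorm y ^+ 2 / dotv d y - y i) g / dotv d y
  else 0.

Definition beta (tau eps : R) (d y g : vec) : R :=
  Num.max 0 (beta_tilde tau eps d y g).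

End CSRH.

From HB Require Import structures.
From mathcomp Require Import all_boot all_order all_algebra.
From mathcomp Require Import all_classical all_reals all_analysis.
From mathcomp Require Import ring lra.
Import Order.TTheory GRing.Theory Num.Theory.
Import numFieldNormedType.Exports.
Local Open Scope ring_scope.
Set Implicit Arguments. Unset Strict Implicit.

(** A Zoutendijk argument on the unit sphere.  The curvilinear update keeps
    the iterates on the sphere and moves them by at most [alpha * |p|].  On the
    sphere the p-norm is bounded away from zero, so f is bounded and its
    gradient g is Lipschitz.  The truncation of beta makes every direction an
    ascent direction with [g.p >= (1 - 1/(4 tau)) |g|^2] and [|p|^2 <= C |g|^2].
    The curvature condition and the Lipschitz bound force
    [alpha >= (1 - c2) g.p / (rho |p|^2)], so the Armijo condition gives
    [f(x_{k+1}) - f(x_k) >= kappa |g_k|^2]; as f increases and is bounded, these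
    increments, hence [|g_k|], tend to zero. *)

Lemma quad_ge0 (R : realFieldType) (A w C z : R) : 0 <= A -> 0 <= C -> w ^+ 2 <= A * C ->
  0 <= A * z ^+ 2 - 2 * w * z + C.
Proof.
move=> A_ge0 C_ge0 disc_le0; have [A0|A_neq0] := eqVneq A 0.
  rewrite A0 mul0r in disc_le0.
  have -> : w = 0 by apply/eqP; rewrite -sqrf_eq0 eq_le sqr_ge0 andbT.
  by rewrite A0 mul0r mulr0 mul0r subr0 add0r.
have A_gt0 : 0 < A by rewrite lt_def A_neq0.
rewrite -(pmulr_rge0 _ A_gt0).
have -> : A * (A * z ^+ 2 - 2 * w * z + C) = (A * z - w) ^+ 2 + (A * C - w ^+ 2) by ring.
by rewrite addr_ge0 ?sqr_ge0 ?subr_ge0.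
Qed.

Section DotProduct.
Variables (R : realType) (n : nat).
Implicit Types (u v w f g : vec R n) (a b c e : R).

Lemma dotvC u v : dotv u v = dotv v u.
Proof. by apply: eq_bigr => i _; rewrite mulrC. Qed.

Lemma dotv_lincombl f u v w a b : (forall i, f i = a * u i + b * v i) ->
  dotv f w = a * dotv u w + b * dotv v w.
Proof.
move=> fE; rewrite /dotv 2!mulr_sumr -big_split /=.
by apply: eq_bigr => i _; rewrite fE; ring.
Qed.

Lemma dotv_lincomb u v f g a b c e : (forall i, f i = a * u i + b * v i) ->
  (forall i, g i = c * u i + e * v i) ->
  dotv f g = a * c * dotv u u + (a * e + b * c) * dotv u v + b * e * dotv v v.
Proof.
move=> fE gE; rewrite /dotv !mulr_sumr -!big_split /=.
by apply: eq_bigr => i _; rewrite fE gE; ring.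
Qed.

Lemma coord_sqr_le_dotv u i : u i ^+ 2 <= dotv u u.
Proof.
rewrite /dotv (bigD1 i) //= expr2 lerDl.
by apply: sumr_ge0 => j _; rewrite -expr2 sqr_ge0.
Qed.

Lemma dotv_ge0 u : 0 <= dotv u u.
Proof. by apply: sumr_ge0 => i _; rewrite -expr2 sqr_ge0. Qed.

Lemma dotv_gt0 u : u <> (fun _ => 0) -> 0 < dotv u u.
Proof.
move=> u_neq0; rewrite lt_def dotv_ge0 andbT; apply/eqP => uu0; apply: u_neq0.
apply/funext => i; apply/eqP; rewrite -sqrf_eq0 eq_le sqr_ge0 andbT -uu0.
exact: coord_sqr_le_dotv.
Qed.

Lemma cauchy_schwarz u v : dotv u v ^+ 2 <= dotv u u * dotv v v.
Proof.
have [uu0|uu_neq0] := eqVneq (dotv u u) 0.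
  have u0 i : u i = 0.
    by apply/eqP; rewrite -sqrf_eq0 eq_le sqr_ge0 andbT -uu0 coord_sqr_le_dotv.
  have -> : dotv u v = 0 by apply: big1 => i _; rewrite u0 mul0r.
  by rewrite uu0 expr0n mul0r.
have uu_gt0 : 0 < dotv u u by rewrite lt_def uu_neq0 dotv_ge0.
have := dotv_ge0 (fun i => dotv u u * v i - dotv u v * u i).
rewrite (@dotv_lincomb u v _ _ (- dotv u v) (dotv u u) (- dotv u v) (dotv u u))
  => [|i|i]; [|ring|ring].
have -> : - dotv u v * - dotv u v * dotv u u
    + (- dotv u v * dotv u u + dotv u u * - dotv u v) * dotv u v
    + dotv u u * dotv u u * dotv v v
  = dotv u u * (dotv u u * dotv v v - dotv u v ^+ 2) by ring.
by rewrite pmulr_rge0 // subr_ge0.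
Qed.

Lemma dotv_le_enorm u v : dotv u v <= enorm u * enorm v.
Proof.
rewrite /enorm -sqrtrM ?dotv_ge0 // (le_trans (ler_norm _)) //.
by rewrite -sqrtr_sqr ler_wsqrtr // cauchy_schwarz.
Qed.

Lemma enorm_sqr u : enorm u ^+ 2 = dotv u u.
Proof. by rewrite sqr_sqrtr // dotv_ge0. Qed.

End DotProduct.

Definition vdist (R : realType) (n : nat) (x y : vec R n) : R := enorm (fun i => x i - y i).

Lemma vdist_ge0 (R : realType) (n : nat) (x y : vec R n) : 0 <= vdist x y.
Proof. exact: sqrtr_ge0. Qed.

Lemma vdistC (R : realType) (n : nat) (x y : vec R n) : vdist x y = vdist y x.
Proof. by rewrite /vdist /enorm /dotv; congr Num.sqrt; apply: eq_bigr => i _; ring. Qed.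

Section Retraction.
Variables (R : realType) (n : nat).
Implicit Types (x d : vec R n) (al : R).

Definition unit_sphere : set (vec R n) := [set x | dotv x x = 1].

Lemma unit_sphere_dim_gt0 x : unit_sphere x -> (0 < n)%N.
Proof.
rewrite lt0n /unit_sphere /=; apply: contra_eqN => /eqP n0.
rewrite /dotv big1 => [|i _]; first by rewrite eq_sym oner_neq0.
by have := ltn_ord i; rewrite {2}n0.
Qed.

Lemma xnextE x d al i : xnext x d al i =
  ((2 - al * dotv x d) ^+ 2 - al ^+ 2 * dotv d d)
    / (4 + al ^+ 2 * dotv d d - (al * dotv x d) ^+ 2) * x i
  + 4 * al / (4 + al ^+ 2 * dotv d d - (al * dotv x d) ^+ 2) * d i.
Proof.
rewrite /xnext; have -> : enorm (fun j => al * d j) ^+ 2 = al ^+ 2 * dotv d d.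
  by rewrite enorm_sqr /dotv mulr_sumr; apply: eq_bigr => j _; ring.
ring.
Qed.

Lemma xnext_denom_ge4 x d al : unit_sphere x ->
  4 <= 4 + al ^+ 2 * dotv d d - (al * dotv x d) ^+ 2.
Proof.
move=> x_unit; have := cauchy_schwarz x d; rewrite x_unit mul1r => cs.
by rewrite -addrA lerDl exprMn -mulrBr mulr_ge0 ?sqr_ge0 ?subr_ge0.
Qed.

Lemma xnext_unit x d al : unit_sphere x -> unit_sphere (xnext x d al).
Proof.
move=> x_unit; have Q_ge4 := xnext_denom_ge4 d al x_unit.
rewrite /unit_sphere /= (dotv_lincomb (xnextE x d al) (xnextE x d al)) x_unit.
by field; rewrite gt_eqF // (lt_le_trans _ Q_ge4).
Qed.

Lemma xnext_dist x d al : unit_sphere x -> 0 <= al ->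
  enorm (fun i => xnext x d al i - x i) <= al * enorm d.
Proof.
move=> x_unit al_ge0; have Q_ge4 := xnext_denom_ge4 d al x_unit.
set a := dotv x d in Q_ge4 *; set P := dotv d d in Q_ge4 *.
set c := al ^+ 2 * P - (al * a) ^+ 2.
have c_ge0 : 0 <= c by rewrite /c; lra.
have step_sqr : dotv (fun i => xnext x d al i - x i) (fun i => xnext x d al i - x i)
    = 4 * c / (4 + c).
  have stepE i : xnext x d al i - x i =
      (((2 - al * a) ^+ 2 - al ^+ 2 * P) / (4 + al ^+ 2 * P - (al * a) ^+ 2) - 1) * x i
      + 4 * al / (4 + al ^+ 2 * P - (al * a) ^+ 2) * d i.
    by rewrite xnextE -/a -/P; ring.
  rewrite (dotv_lincomb stepE stepE) x_unit -/a -/P /c.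
  by field; rewrite gt_eqF //; lra.
rewrite -(@ler_pXn2r _ 2) // ?nnegrE ?mulr_ge0 ?sqrtr_ge0 //.
rewrite exprMn !enorm_sqr step_sqr ler_pdivrMr ?ltr_wpDr // -/P.
have : c <= al ^+ 2 * P by rewrite /c lerBlDr lerDl sqr_ge0.
nra.
Qed.

End Retraction.

Section BoundedLipschitz.
Variables (R : realFieldType) (T : Type) (S : set T) (dist : T -> T -> R).
Implicit Types (h g : T -> R).

Definition bounded_lipschitz h := exists M L : R,
  (forall x, S x -> `|h x| <= M) /\
  (forall x y, S x -> S y -> `|h x - h y| <= L * dist x y).

Local Notation BL := bounded_lipschitz.

Lemma eq_bounded_lipschitz h g : (forall x, S x -> h x = g x) -> BL h -> BL g.
Proof.
move=> hg [M [L [hM hL]]]; exists M, L; split=> [x Sx|x y Sx Sy]; rewrite -!hg //.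
  exact: hM.
exact: hL.
Qed.

Lemma bounded_lipschitz_cst (c : R) : BL (fun _ => c).
Proof. by exists `|c|, 0; split=> // x y _ _; rewrite subrr normr0 mul0r. Qed.

Lemma bounded_lipschitzD h g : BL h -> BL g -> BL (fun x => h x + g x).
Proof.
move=> [M1 [L1 [hM hL]]] [M2 [L2 [gM gL]]]; exists (M1 + M2), (L1 + L2).
split=> [x Sx|x y Sx Sy]; first by rewrite (le_trans (ler_normD _ _)) // lerD ?hM ?gM.
have -> : h x + g x - (h y + g y) = (h x - h y) + (g x - g y) by ring.
by rewrite mulrDl (le_trans (ler_normD _ _)) // lerD ?hL ?gL.
Qed.

Lemma bounded_lipschitzN h : BL h -> BL (fun x => - h x).
Proof.
move=> [M [L [hM hL]]]; exists M, L.
by split=> [x Sx|x y Sx Sy]; rewrite ?normrN ?hM // -opprD normrN hL.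
Qed.

Lemma bounded_lipschitzM h g : BL h -> BL g -> BL (fun x => h x * g x).
Proof.
move=> [M1 [L1 [hM hL]]] [M2 [L2 [gM gL]]].
exists (M1 * M2), (M1 * L2 + M2 * L1); split=> [x Sx|x y Sx Sy].
  by rewrite normrM ler_pM ?hM ?gM.
have -> : h x * g x - h y * g y = h x * (g x - g y) + g y * (h x - h y) by ring.
rewrite (le_trans (ler_normD _ _)) // !normrM mulrDl -!mulrA.
by rewrite lerD // ler_pM ?hM ?gM ?hL ?gL.
Qed.

Lemma bounded_lipschitz_norm h : BL h -> BL (fun x => `|h x|).
Proof.
move=> [M [L [hM hL]]]; exists M, L; split=> [x Sx|x y Sx Sy].
  by rewrite normr_id hM.
by rewrite (le_trans (ler_dist_dist _ _)) ?hL.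
Qed.

Lemma bounded_lipschitzV h (m : R) : 0 < m -> (forall x, S x -> m <= `|h x|) ->
  BL h -> BL (fun x => (h x)^-1).
Proof.
move=> m_gt0 hm [M [L [hM hL]]]; exists m^-1, (L / m ^+ 2).
split=> [x Sx|x y Sx Sy].
  by rewrite normfV lef_pV2 ?hm // posrE (lt_le_trans m_gt0) ?hm.
have hx_gt0 : 0 < `|h x| by rewrite (lt_le_trans m_gt0) ?hm.
have hy_gt0 : 0 < `|h y| by rewrite (lt_le_trans m_gt0) ?hm.
have -> : (h x)^-1 - (h y)^-1 = (h y - h x) / (h x * h y).
  by field; rewrite -!normr_gt0 hx_gt0 hy_gt0.
rewrite normrM normfV normrM distrC mulrAC ler_pM ?invr_ge0 ?mulr_ge0 ?hL //.
by rewrite lef_pV2 ?posrE ?exprn_gt0 ?mulr_gt0 // expr2 ler_pM ?hm // ltW.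
Qed.

Lemma bounded_lipschitz_sum (I : Type) (r : seq I) (P : pred I) (F : I -> T -> R) :
  (forall i, BL (F i)) -> BL (fun x => \sum_(i <- r | P i) F i x).
Proof.
move=> BLF; elim: r => [|i r IHr].
  by apply: (eq_bounded_lipschitz _ (bounded_lipschitz_cst 0)) => x _; rewrite big_nil.
case Pi: (P i); last by apply: eq_bounded_lipschitz IHr => x _; rewrite big_cons Pi.
apply: eq_bounded_lipschitz (bounded_lipschitzD (BLF i) IHr) => x _.
by rewrite big_cons Pi.
Qed.

Lemma bounded_lipschitz_prod (I : Type) (r : seq I) (P : pred I) (F : I -> T -> R) :
  (forall i, BL (F i)) -> BL (fun x => \prod_(i <- r | P i) F i x).
Proof.
move=> BLF; elim: r => [|i r IHr].
  by apply: (eq_bounded_lipschitz _ (bounded_lipschitz_cst 1)) => x _; rewrite big_nil.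
case Pi: (P i); last by apply: eq_bounded_lipschitz IHr => x _; rewrite big_cons Pi.
apply: eq_bounded_lipschitz (bounded_lipschitzM (BLF i) IHr) => x _.
by rewrite big_cons Pi.
Qed.

Lemma bounded_lipschitzX h k : BL h -> BL (fun x => h x ^+ k).
Proof.
move=> BLh; elim: k => [|k IHk].
  exact: eq_bounded_lipschitz (bounded_lipschitz_cst 1).
apply: eq_bounded_lipschitz (bounded_lipschitzM BLh IHk) => x _.
by rewrite exprS.
Qed.

End BoundedLipschitz.

Lemma dist_exprS_ge (R : realDomainType) (k : nat) (a b m : R) :
  0 < m -> m <= a -> m <= b -> m ^+ k * `|a - b| <= `|a ^+ k.+1 - b ^+ k.+1|.
Proof.
move=> m_gt0 ma mb; have a_ge0 := le_trans (ltW m_gt0) ma.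
have b_ge0 := le_trans (ltW m_gt0) mb.
rewrite subrXX normrM mulrC ler_wpM2l // big_ord_recl /= subn0 expr0 mulr1.
rewrite ger0_norm; last by rewrite addr_ge0 ?sumr_ge0 // => *; rewrite ?mulr_ge0 ?exprn_ge0.
apply: (le_trans (y := a ^+ k)); first by rewrite lerXn2r // nnegrE ltW.
by rewrite lerDl sumr_ge0 // => i _; rewrite mulr_ge0 ?exprn_ge0.
Qed.

Lemma lipschitz_coordwise (R : realType) (n : nat) (T : Type) (S : set T)
    (dist : T -> T -> R) (F : T -> vec R n) :
  (forall x y, 0 <= dist x y) ->
  (forall i, exists L, forall x y, S x -> S y -> `|F x i - F y i| <= L * dist x y) ->
  exists L, 0 <= L /\ forall x y, S x -> S y -> vdist (F x) (F y) <= L * dist x y.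
Proof.
move=> dist_ge0 /fin_all_exists[L FL]; exists (Num.sqrt (\sum_i L i ^+ 2)).
split=> [|x y Sx Sy]; first exact: sqrtr_ge0.
rewrite -[dist x y]ger0_norm // -sqrtr_sqr -sqrtrM ?sumr_ge0 // => [|i _].
  rewrite ler_wsqrtr // mulr_suml /dotv; apply: ler_sum => i _.
  rewrite -expr2 -exprMn -real_normK ?num_real //.
  by rewrite lerXn2r ?nnegrE ?FL // (le_trans _ (FL i x y Sx Sy)).
exact: sqr_ge0.
Qed.

Section SphereRegularity.
Variables (R : realType) (n r p : nat) (E : {set {set 'I_n}}) (s : {set 'I_n} -> R).
Hypothesis p_gt1 : (1 < p)%N.

Local Notation BL := (bounded_lipschitz (@unit_sphere R n) (@vdist R n)).

Lemma bounded_lipschitz_coord i : BL (fun x => x i).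
Proof.
exists 1, 1; split=> [x x_unit|x y _ _].
  by rewrite -(sqrtr_sqr (x i)) -sqrtr1 ler_wsqrtr // -x_unit coord_sqr_le_dotv.
rewrite mul1r -(sqrtr_sqr (x i - y i)) ler_wsqrtr //.
exact: (coord_sqr_le_dotv (fun j => x j - y j)).
Qed.

Lemma pnorm_expr (x : vec R n) : pnorm p x ^+ p = \sum_i `|x i| ^+ p.
Proof.
have p_neq0 : (p%:R : R) != 0 by rewrite pnatr_eq0 -lt0n ltnW.
have sum_ge0 : 0 <= \sum_i `|x i| ^+ p by rewrite sumr_ge0 // => i _; rewrite exprn_ge0.
by rewrite /pnorm -powR_mulrn ?powR_ge0 // -powRrM mulVf // powRr1.
Qed.

Lemma sphere_coord_sqr_ge (x : vec R n) : unit_sphere x ->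
  exists i, n%:R^-1 <= x i ^+ 2.
Proof.
move=> x_unit; case: (boolP [exists i, n%:R^-1 <= x i ^+ 2]) => [/existsP//|].
move=> /existsPn small; exfalso.
have n_gt0 := unit_sphere_dim_gt0 x_unit.
have : \sum_(i < n) x i ^+ 2 < \sum_(i < n) n%:R^-1.
  apply: ltr_sum => [|i _]; last by rewrite ltNge small.
  by apply/hasP; exists (Ordinal n_gt0); rewrite ?mem_index_enum.
rewrite sumr_const card_ord -[_ *+ n]mulr_natr mulVf ?pnatr_eq0 -?lt0n //.
suff -> : \sum_(i < n) x i ^+ 2 = 1 by rewrite ltxx.
by rewrite -x_unit; apply: eq_bigr => i _; rewrite expr2.
Qed.

Lemma pnorm_sphere_lb :
  exists m : R, 0 < m /\ forall x : vec R n, unit_sphere x -> m <= pnorm p x.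
Proof.
have [n0|n_gt0] := posnP n.
  by exists 1; split=> // x /unit_sphere_dim_gt0/lt0n_neq0/eqP/(_ n0).
have n_gt0R : 0 < (n%:R : R) by rewrite ltr0n.
have m_le1 : n%:R^-1 ^+ p <= 1 :> R.
  by apply: exprn_ile1; [rewrite invr_ge0 ltW | rewrite invf_le1 // ler1n].
exists (n%:R^-1 ^+ p); split=> [|x x_unit]; first by rewrite exprn_gt0 ?invr_gt0.
have [i xi_ge] := sphere_coord_sqr_ge x_unit.
have xi_le1 : `|x i| <= 1.
  by rewrite -(sqrtr_sqr (x i)) -sqrtr1 ler_wsqrtr // -x_unit coord_sqr_le_dotv.
have xi_lb : n%:R^-1 <= `|x i|.
  by rewrite (le_trans xi_ge) // -real_normK ?num_real // ler_iXnr.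
have mass_lb : n%:R^-1 ^+ p <= pnorm p x ^+ p.
  rewrite pnorm_expr (bigD1 i) //= (le_trans _ (_ : `|x i| ^+ p <= _)) //.
    by rewrite lerXn2r // nnegrE invr_ge0 ltW.
  by rewrite lerDl sumr_ge0 // => j _; rewrite exprn_ge0.
have [pnorm_le1|/ltW] := leP (pnorm p x) 1; last exact: le_trans m_le1.
apply: le_trans mass_lb _; apply: ler_iXnr => //; [exact: ltnW | exact: powR_ge0].
Qed.

Lemma bounded_lipschitz_pnorm : BL (pnorm p).
Proof.
have [m [m_gt0 m_le]] := pnorm_sphere_lb.
have [M [L [massM massL]]] : BL (fun x => \sum_i `|x i| ^+ p).
  apply: bounded_lipschitz_sum => i; apply: bounded_lipschitzX.
  exact/bounded_lipschitz_norm/bounded_lipschitz_coord.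
exists (1 + M), (L / m ^+ p.-1); split=> [x x_unit|x y x_unit y_unit].
  rewrite ger0_norm ?powR_ge0 //.
  have [pnorm_le1|/ltW pnorm_ge1] := leP (pnorm p x) 1.
    by rewrite (le_trans pnorm_le1) // lerDl (le_trans _ (massM x x_unit)).
  rewrite (le_trans (ler_eXnr (ltnW p_gt1) pnorm_ge1)) // pnorm_expr.
  by rewrite (le_trans (ler_norm _)) // (le_trans (massM x x_unit)) // lerDr.
have := dist_exprS_ge p.-1 m_gt0 (m_le x x_unit) (m_le y y_unit).
rewrite (prednK (ltnW p_gt1)) !pnorm_expr => /le_trans/(_ (massL x y x_unit y_unit)).
by rewrite mulrC -ler_pdivlMr ?exprn_gt0 // mulrAC.
Qed.

Lemma bounded_lipschitz_pnormVX k : BL (fun x => (pnorm p x ^+ k)^-1).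
Proof.
have [m [m_gt0 m_le]] := pnorm_sphere_lb.
apply: (bounded_lipschitzV (m := m ^+ k)); first by rewrite exprn_gt0.
  move=> x x_unit; rewrite normrX; apply: lerXn2r; rewrite ?nnegrE ?normr_ge0 //.
    exact: ltW.
  by rewrite (le_trans (m_le x x_unit)) // ler_norm.
exact/bounded_lipschitzX/bounded_lipschitz_pnorm.
Qed.

Lemma bounded_lipschitz_xpow i : BL (fun x => xpow p x i).
Proof.
apply: eq_bounded_lipschitz (bounded_lipschitzM (bounded_lipschitz_coord i)
  (bounded_lipschitzX p.-2 (bounded_lipschitz_norm (bounded_lipschitz_coord i)))).
move=> x _; rewrite /xpow -(subnKC p_gt1) /= exprS add0n {1}(numEsg (x i)).
ring.
Qed.

Lemma bounded_lipschitz_Axr : BL (Axr r E s).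
Proof.
rewrite /Axr; apply: bounded_lipschitz_sum => t.
apply: bounded_lipschitzM; first exact: bounded_lipschitz_cst.
by apply: bounded_lipschitz_prod => j; apply: bounded_lipschitz_coord.
Qed.

Lemma bounded_lipschitz_Axr1 i : BL (fun x => Axr1 r E s x i).
Proof.
rewrite /Axr1; apply: bounded_lipschitz_sum => t.
apply: bounded_lipschitzM; first exact: bounded_lipschitz_cst.
by apply: bounded_lipschitz_prod => j; apply: bounded_lipschitz_coord.
Qed.

Lemma bounded_lipschitz_grad i : BL (fun x => grad r p E s x i).
Proof.
rewrite /grad; apply: bounded_lipschitzM.
  exact/bounded_lipschitzM/bounded_lipschitz_pnormVX/bounded_lipschitz_cst.
apply/bounded_lipschitzD/bounded_lipschitzN; first exact: bounded_lipschitz_Axr1.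
apply/bounded_lipschitzM/bounded_lipschitz_xpow.
exact/bounded_lipschitzM/bounded_lipschitz_pnormVX/bounded_lipschitz_Axr.
Qed.

Lemma fobj_sphere_bounded : exists M, forall x, unit_sphere x -> fobj r p E s x <= M.
Proof.
have [M [_ [fobjM _]]] : BL (fobj r p E s).
  apply/bounded_lipschitzM/bounded_lipschitz_pnormVX.
  exact/bounded_lipschitzM/bounded_lipschitz_Axr/bounded_lipschitz_cst.
by exists M => x x_unit; rewrite (le_trans (ler_norm _)) ?fobjM.
Qed.

Lemma grad_sphere_lipschitz : exists L, 0 <= L /\ forall x y, unit_sphere x -> unit_sphere y ->
  vdist (grad r p E s x) (grad r p E s y) <= L * vdist x y.
Proof.
apply: lipschitz_coordwise => [|i]; first exact: vdist_ge0.
by have [_ [L [_ gradL]]] := bounded_lipschitz_grad i; exists L.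
Qed.

End SphereRegularity.

Lemma cg_coef_sqr_bound (R : realFieldType) (tau eps Y D G dg yg s : R) :
  0 < eps -> 0 <= Y -> 0 <= D -> 0 <= G -> dg ^+ 2 <= D * G -> yg ^+ 2 <= Y * G ->
  eps ^+ 2 * (D * Y) <= s ^+ 2 -> s != 0 ->
  ((tau * Y * dg / s - yg) / s) ^+ 2 * D <= (2 * tau ^+ 2 / eps ^+ 4 + 2 / eps ^+ 2) * G.
Proof.
move=> eps_gt0 Y_ge0 D_ge0 G_ge0 dg_le yg_le s_ge s_neq0.
have s2_gt0 : 0 < s ^+ 2 by rewrite lt_def sqrf_eq0 s_neq0 sqr_ge0.
have e2_gt0 : 0 < eps ^+ 2 by rewrite exprn_gt0.
set t := D * Y / s ^+ 2.
have t_ge0 : 0 <= t by apply: divr_ge0; [exact: mulr_ge0 | exact: ltW].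
have t_le : t <= (eps ^+ 2)^-1.
  by rewrite /t ler_pdivrMr // [_^-1 * _]mulrC ler_pdivlMr // mulrC.
have t2_le : t ^+ 2 <= (eps ^+ 4)^-1.
  rewrite -[4%N]/(2 * 2)%N exprM -exprVn; apply: lerXn2r; rewrite ?nnegrE ?invr_ge0 //.
  exact: ltW.
set u := tau * Y * dg / s ^+ 2; set v := yg / s.
have -> : (tau * Y * dg / s - yg) / s = u - v by rewrite /u /v; field.
have u_le : u ^+ 2 * D <= tau ^+ 2 * t ^+ 2 * G.
  have -> : u ^+ 2 * D = tau ^+ 2 * (Y / s ^+ 2) ^+ 2 * D * dg ^+ 2 by rewrite /u; field.
  have -> : tau ^+ 2 * t ^+ 2 * G = tau ^+ 2 * (Y / s ^+ 2) ^+ 2 * D * (D * G).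
    by rewrite /t; field.
  by apply: ler_wpM2l => //; apply: mulr_ge0 => //; apply: mulr_ge0; exact: sqr_ge0.
have v_le : v ^+ 2 * D <= t * G.
  have -> : v ^+ 2 * D = D / s ^+ 2 * yg ^+ 2 by rewrite /v; field.
  have -> : t * G = D / s ^+ 2 * (Y * G) by rewrite /t; field.
  by apply: ler_wpM2l => //; apply: divr_ge0 => //; exact: ltW.
have uv_le : (u - v) ^+ 2 * D <= 2 * (u ^+ 2 * D) + 2 * (v ^+ 2 * D).
  rewrite -subr_ge0.
  have -> : 2 * (u ^+ 2 * D) + 2 * (v ^+ 2 * D) - (u - v) ^+ 2 * D = (u + v) ^+ 2 * D by ring.
  by rewrite mulr_ge0 ?sqr_ge0.
apply: (le_trans uv_le); rewrite [_ * G]mulrDl; apply: lerD.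
  rewrite -mulrA -[X in _ <= X]mulrA; apply: ler_wpM2l => //.
  rewrite [_^-1 * G]mulrC mulrA; apply: (le_trans u_le).
  by rewrite mulrAC; apply: ler_wpM2l => //; rewrite mulr_ge0 ?sqr_ge0.
rewrite -[X in _ <= X]mulrA; apply: ler_wpM2l => //.
by apply: (le_trans v_le); nra.
Qed.

Section ConjugateDirection.
Variables (R : realType) (n : nat) (tau eps : R).
Hypotheses (tau_gt : 1 / 4 < tau) (eps_gt0 : 0 < eps).
Implicit Types (d y g pd : vec R n).

Local Notation c0 := (1 - (4 * tau)^-1).
Local Notation K := (2 * tau ^+ 2 / eps ^+ 4 + 2 / eps ^+ 2).

Lemma betaP d y g : beta tau eps d y g = 0 \/
  [/\ eps * enorm d * enorm y <= `|dotv d y|, dotv d y != 0 &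
      beta tau eps d y g = (tau * dotv y y * dotv d g / dotv d y - dotv y g) / dotv d y].
Proof.
rewrite /beta; have [bt_le0|bt_gt0] := leP (beta_tilde tau eps d y g) 0.
  by left.
right; move: bt_gt0; rewrite /beta_tilde.
case: ifP => [guard|]; last by rewrite ltxx.
have [->|s_neq0] := eqVneq (dotv d y) 0; first by rewrite invr0 mulr0 ltxx.
move=> _; split=> //; rewrite enorm_sqr.
rewrite (@dotv_lincombl _ _ _ d y g (tau * dotv y y / dotv d y) (-1)) => [|i]; last by ring.
by congr (_ / _); ring.
Qed.

Lemma beta_ascent d y g : c0 * dotv g g <= dotv g g + beta tau eps d y g * dotv d g.
Proof.
have tau_gt0 : 0 < tau by rewrite (lt_trans _ tau_gt) // divr_gt0.
have G_ge0 := dotv_ge0 g.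
have [->|[_ s_neq0 ->]] := betaP d y g.
  by rewrite mul0r addr0 mulrBl mul1r gerBl mulr_ge0 // invr_ge0 mulr_ge0 // ltW.
set Y := dotv y y; set s := dotv d y; set dg := dotv d g; set yg := dotv y g.
(* a quadratic in [dg / s] whose discriminant is nonpositive by Cauchy-Schwarz *)
rewrite -subr_ge0.
have -> : dotv g g + (tau * Y * dg / s - yg) / s * dg - c0 * dotv g g =
    tau * Y * (dg / s) ^+ 2 - 2 * (yg / 2) * (dg / s) + dotv g g / (4 * tau).
  by field; rewrite s_neq0 gt_eqF.
apply: quad_ge0.
- by rewrite mulr_ge0 ?dotv_ge0 // ltW.
- by rewrite divr_ge0 // mulr_ge0 // ltW.
have -> : tau * Y * (dotv g g / (4 * tau)) = Y * dotv g g / 4 by field; rewrite gt_eqF.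
have -> : (yg / 2) ^+ 2 = yg ^+ 2 / 4 by field.
by rewrite ler_pM2r // cauchy_schwarz.
Qed.

Lemma beta_sqr_const_ge0 : 0 <= K.
Proof.
have e_ge0 := ltW eps_gt0.
by rewrite addr_ge0 // divr_ge0 ?exprn_ge0 // mulr_ge0 // sqr_ge0.
Qed.

Lemma beta_sqr_bound d y g : beta tau eps d y g ^+ 2 * dotv d d <= K * dotv g g.
Proof.
have [->|[guard s_neq0 ->]] := betaP d y g.
  by rewrite expr0n mul0r mulr_ge0 ?dotv_ge0 ?beta_sqr_const_ge0.
apply: cg_coef_sqr_bound; rewrite ?dotv_ge0 ?cauchy_schwarz //.
have lhs_ge0 : 0 <= eps * enorm d * enorm y.
  by apply: mulr_ge0; [apply: mulr_ge0; [exact: ltW | exact: sqrtr_ge0] | exact: sqrtr_ge0].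
rewrite -!enorm_sqr -!exprMn mulrA -[dotv d y ^+ 2]real_normK ?num_real //.
by apply: lerXn2r; rewrite ?nnegrE ?normr_ge0.
Qed.

Lemma csrh_direction_bounds d y g pd :
  (forall i, pd i = g i + beta tau eps d y g * d i) ->
  c0 * dotv g g <= dotv g pd /\ dotv pd pd <= (2 + 2 * K) * dotv g g.
Proof.
set b := beta tau eps d y g => pdE.
have pdE' i : pd i = 1 * g i + b * d i by rewrite pdE mul1r.
split; first by rewrite dotvC (dotv_lincombl _ pdE') mul1r beta_ascent.
rewrite (dotv_lincomb pdE' pdE') mulrDl mulrA.
have := beta_sqr_bound d y g; rewrite -/b.
have := quad_ge0 b (dotv_ge0 d) (dotv_ge0 g) (cauchy_schwarz d g).
rewrite dotvC; lra.
Qed.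

Lemma csrh_ascent_const_gt0 : 0 < c0.
Proof.
rewrite subr_gt0 invf_lt1 ?mulr_gt0 //; last by rewrite (lt_trans _ tau_gt).
by rewrite -ltr_pdivrMl // mulrC.
Qed.

Lemma csrh_directions (x g pd : nat -> vec R n) : pd 0%N = g 0%N ->
  (forall k, pd k.+1 = (fun i => g k.+1 i + beta tau eps (fun j => x k.+1 j - x k j)
                           (fun j => g k.+1 j - g k j) (g k.+1) * (x k.+1 i - x k i))) ->
  forall k, c0 * dotv (g k) (g k) <= dotv (g k) (pd k) /\
    dotv (pd k) (pd k) <= (2 + 2 * K) * dotv (g k) (g k).
Proof.
move=> pd0 pdS [|k].
  have tau4_ge0 : 0 <= (4 * tau)^-1 by rewrite invr_ge0 mulr_ge0 // ltW // (lt_trans _ tau_gt).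
  have K_ge0 := beta_sqr_const_ge0; have G_ge0 := dotv_ge0 (g 0%N).
  by rewrite pd0; split; nra.
apply: (csrh_direction_bounds (d := fun j => x k.+1 j - x k j) (y := fun j => g k.+1 j - g k j)).
by move=> i; rewrite pdS.
Qed.

End ConjugateDirection.

Lemma wolfe_zoutendijk (R : realType) (n : nat) (F : vec R n -> R) (G : vec R n -> vec R n)
    (rho c1 c2 al : R) (x d : vec R n) :
  0 <= rho -> 0 <= c1 -> 0 < al ->
  (forall x y, unit_sphere x -> unit_sphere y -> vdist (G x) (G y) <= rho * vdist x y) ->
  unit_sphere x -> 0 <= dotv (G x) d ->
  F x + c1 * al * dotv (G x) d <= F (xnext x d al) ->
  dotv (G (xnext x d al)) d <= c2 * dotv (G x) d ->
  c1 * (1 - c2) * dotv (G x) d ^+ 2 <= rho * dotv d d * (F (xnext x d al) - F x).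
Proof.
move=> rho_ge0 c1_ge0 al_gt0 G_lip x_unit ascent armijo curvature.
set x' := xnext x d al in armijo curvature *.
have x'_unit : unit_sphere x' by exact: xnext_unit.
have gain : (1 - c2) * dotv (G x) d <= dotv (fun i => G x i - G x' i) d.
  rewrite (@dotv_lincombl _ _ (fun i => G x i - G x' i) (G x) (G x') d 1 (-1)) => [|i].
    lra.
  by ring.
have lip : vdist (G x) (G x') <= rho * (al * enorm d).
  apply: (le_trans (G_lip _ _ x_unit x'_unit)); apply: ler_wpM2l => //.
  by rewrite vdistC; apply: xnext_dist => //; exact: ltW.
have step : dotv (fun i => G x i - G x' i) d <= rho * al * dotv d d.
  apply: (le_trans (dotv_le_enorm _ _)).
  rewrite -enorm_sqr expr2 mulrA; apply: ler_wpM2r; first exact: sqrtr_ge0.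
  by rewrite -mulrA.
have angle := le_trans gain step.
have c1gd_ge0 : 0 <= c1 * dotv (G x) d by exact: mulr_ge0.
have rhoP_ge0 : 0 <= rho * dotv d d by rewrite mulr_ge0 ?dotv_ge0.
nra.
Qed.

Lemma sqr_angle_increment_bound (R : realFieldType) (a c0 C rho G gp P df : R) :
  0 < a -> 0 < c0 -> 0 < G -> 0 <= rho -> 0 <= df ->
  c0 * G <= gp -> P <= C * G -> a * gp ^+ 2 <= rho * P * df ->
  G <= rho * C / (a * c0 ^+ 2) * df.
Proof.
move=> a_gt0 c0_gt0 G_gt0 rho_ge0 df_ge0 angle P_le increase.
have c0G_ge0 : 0 <= c0 * G by rewrite mulr_ge0 // ltW.
have gp_sqr : (c0 * G) ^+ 2 <= gp ^+ 2 by rewrite lerXn2r ?nnegrE // (le_trans c0G_ge0).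
have bound : a * (c0 * G) ^+ 2 <= rho * C * G * df.
  apply: (le_trans (ler_wpM2l (ltW a_gt0) gp_sqr)); apply: (le_trans increase).
  have := mulr_ge0 rho_ge0 df_ge0; nra.
rewrite mulrAC ler_pdivlMr ?mulr_gt0 ?exprn_gt0 // -(ler_pM2l G_gt0).
have -> : G * (G * (a * c0 ^+ 2)) = a * (c0 * G) ^+ 2 by ring.
by have -> : G * (rho * C * df) = rho * C * G * df by ring.
Qed.

Lemma cvg0_of_increments (R : realType) (u w : nat -> R) (K M : R) :
  (forall k, u k <= u k.+1) -> (forall k, u k <= M) ->
  (forall k, 0 <= w k <= K * (u k.+1 - u k)) -> (w @ \oo --> 0)%classic.
Proof.
move=> u_nd u_le w_le.
have u_cvg : cvgn u.
  apply: nondecreasing_is_cvgn; first exact/nondecreasing_seqP.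
  by exists M => _ [k _ <-].
have du0 : ((fun k => u k.+1 - u k) @ \oo --> 0)%classic.
  rewrite -(subrr (limn u)); apply: cvgB => //.
  by rewrite (cvg_shiftS u).
apply: (squeeze_cvgr _ (cvg_cst 0) (_ : (fun k => K * (u k.+1 - u k)) @ \oo --> 0)%classic).
  exact: nearW.
by rewrite -(mulr0 K); apply: cvgMr.
Qed.

Lemma cvg_enorm0 (R : realType) (n : nat) (v : nat -> vec R n) :
  ((fun k => dotv (v k) (v k)) @ \oo --> 0)%classic ->
  ((fun k => enorm (v k)) @ \oo --> 0)%classic.
Proof.
move=> vv0; rewrite -sqrtr0; apply: (cvg_comp _ _ vv0).
exact: sqrt_continuous.
Qed.


Unset Implicit Arguments. Set Strict Implicit.
Theorem theorem4p1 (R : realType) (n r p : nat)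
  (E : {set {set 'I_n}}) (s : {set 'I_n} -> R)
  (c1 c2 tau eps : R)
  (x pd : nat -> vec R n) (alpha : nat -> R) :
  (2 <= r)%N -> (2 <= p)%N ->
  (forall e, e \in E -> #|e| = r) ->
  (forall e, e \in E -> 0 < s e) ->
  0 < c1 -> c1 < c2 -> c2 < 1 ->
  1 / 4 < tau -> tau < 1 -> 0 < eps ->
  dotv (x 0%N) (x 0%N) = 1 ->
  pd 0%N = grad r p E s (x 0%N) ->
  (forall k, 0 < alpha k) ->
  (forall k, fobj r p E s (xnext (x k) (pd k) (alpha k))
             >= fobj r p E s (x k)
                + c1 * alpha k * dotv (grad r p E s (x k)) (pd k)) ->
  (forall k, dotv (grad r p E s (xnext (x k) (pd k) (alpha k))) (pd k)
             <= c2 * dotv (grad r p E s (x k)) (pd k)) ->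
  (forall k, x k.+1 = xnext (x k) (pd k) (alpha k)) ->
  (forall k, pd k.+1 = (fun i =>
      grad r p E s (x k.+1) i
      + beta tau eps (fun j => x k.+1 j - x k j)
                     (fun j => grad r p E s (x k.+1) j - grad r p E s (x k) j)
                     (grad r p E s (x k.+1))
        * (x k.+1 i - x k i))) ->
  (forall k, grad r p E s (x k) <> (fun _ => 0)) ->
  ((fun k => enorm (grad r p E s (x k))) @ \oo --> (0 : R))%classic.
Proof.
move=> _ p_gt1 _ _ c1_gt0 _ c2_lt1 tau_gt _ eps_gt0 x0_unit pd0 alpha_gt0 armijo
  curvature xS pdS grad_neq0.
set g := fun k => grad r p E s (x k).
have x_unit k : unit_sphere (x k) by elim: k => // k IH; rewrite xS; exact: xnext_unit.
have dir := csrh_directions tau_gt eps_gt0 (g := g) pd0 pdS.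
have c0_gt0 := csrh_ascent_const_gt0 tau_gt.
have [rho [rho_ge0 grad_lip]] := grad_sphere_lipschitz r E s p_gt1.
have [M f_le] := fobj_sphere_bounded r E s p_gt1.
have gp_ge0 k : 0 <= dotv (g k) (pd k).
  by have [angle _] := dir k; rewrite (le_trans _ angle) // mulr_ge0 ?dotv_ge0 // ltW.
have df_ge0 k : 0 <= fobj r p E s (x k.+1) - fobj r p E s (x k).
  rewrite subr_ge0 xS (le_trans _ (armijo k)) // lerDl.
  by rewrite !mulr_ge0 ?gp_ge0 // ltW.
have G_gt0 k : 0 < dotv (g k) (g k) := dotv_gt0 (grad_neq0 k).
have a_gt0 : 0 < c1 * (1 - c2) by rewrite mulr_gt0 ?subr_gt0.
apply: cvg_enorm0.
apply: (@cvg0_of_increments _ (fun k => fobj r p E s (x k)) _ _ M) => [k|k|k].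
- by rewrite -subr_ge0.
- exact: f_le.
have [angle P_le] := dir k; rewrite ltW ?G_gt0 //=.
apply: (sqr_angle_increment_bound a_gt0 c0_gt0 (G_gt0 k) rho_ge0 (df_ge0 k) angle P_le).
rewrite xS; exact: wolfe_zoutendijk rho_ge0 (ltW c1_gt0) (alpha_gt0 k) grad_lip (x_unit k)
  (gp_ge0 k) (armijo k) (curvature k).
Qed.
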